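(* There exist a meromorphic function $f:\mathbb{D}\to\mathbb{P}$ of bounded Nevanlinna characteristic (i.e. $\sup_{r<1}T(f;r)<\infty$) and $\theta\in\mathbb{R}$ such that, with $\gamma(t)=\tanh(\frac t2)e^{i\theta}$ and $L_S(\rho_0)=\int_0^{\rho_0}\|f'(\gamma(t))\|_{H\to S}\,dt$, one has $L_S(\rho_0)/\rho_0\to\infty$ as $\rho_0\to\infty$; in particular $L_S(\rho_0)\neq O(\rho_0)$.
   Context: $\mathbb{D}=\{|z|<1\}$ carries the hyperbolic metric with density $\lambda_H(z)=2/(1-|z|^2)$; $\mathbb{P}=\mathbb{C}\cup\{\infty\}$ carries the spherical metric with density $\lambda_S(w)=2/(1+|w|^2)$; $\|f'(z)\|_{H\to S}=\frac{2|f'(z)|}{1+|f(z)|^2}\cdot\frac{1-|z|^2}{2}$ (extended continuously at poles). The Nevanlinna characteristic is $T(f;r)=\int_0^r S(f;s)\frac{ds}{s}$ with $S(f;s)=\frac{1}{4\pi}\int_{|z|<s}|f'(z)|^2\lambda_S(f(z))^2\,dx\,dy$. *)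

From Stdlib Require Import Reals Lra ClassicalEpsilon.
Open Scope R_scope.

Definition CC := (R * R)%type.
Definition Cadd (z w : CC) : CC := (fst z + fst w, snd z + snd w).
Definition Csub (z w : CC) : CC := (fst z - fst w, snd z - snd w).
Definition Cmul (z w : CC) : CC :=
  (fst z * fst w - snd z * snd w, fst z * snd w + snd z * fst w).
Definition Cnorm2 (z : CC) : R := fst z * fst z + snd z * snd z.
Definition Cabs (z : CC) : R := sqrt (Cnorm2 z).
Definition Cinv (z : CC) : CC := (fst z / Cnorm2 z, - snd z / Cnorm2 z).
Definition C0 : CC := (0, 0).

Definition in_disk (z : CC) : Prop := Cabs z < 1.
Definition in_ball (c : CC) (r : R) (z : CC) : Prop := Cabs (Csub z c) < r.

Definition is_cderiv (g : CC -> CC) (z d : CC) : Prop :=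
  forall eps, 0 < eps -> exists delta, 0 < delta /\
    forall h : CC, 0 < Cabs h < delta ->
      Cabs (Csub (Csub (g (Cadd z h)) (g z)) (Cmul d h)) <= eps * Cabs h.

(** Riemann sphere P = CC ∪ {∞}: [Some w] is the finite point w, [None] is ∞ *)
Definition Csph := option CC.
Definition recip (w : Csph) : Csph :=
  match w with
  | None => Some C0
  | Some v => if Req_EM_T (Cnorm2 v) 0 then None else Some (Cinv v)
  end.

Definition holo_on (F : CC -> Csph) (U : CC -> Prop) : Prop :=
  exists g : CC -> CC, (forall z, U z -> F z = Some (g z)) /\
    (forall z, U z -> exists d, is_cderiv g z d).

Definition meromorphic_on_disk (f : CC -> Csph) : Prop :=
  (forall z0, in_disk z0 -> exists r, 0 < r /\
     (forall z, in_ball z0 r z -> in_disk z) /\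
     (holo_on f (in_ball z0 r) \/ holo_on (fun z => recip (f z)) (in_ball z0 r)))
  /\ (exists z0, in_disk z0 /\ f z0 <> None).

(** v is the spherical derivative 2|f'(z)|/(1+|f(z)|^2) of f at z,
    extended at poles via 1/f (where it equals 2|(1/f)'(z)|). *)
Definition sph_deriv (f : CC -> Csph) (z : CC) (v : R) : Prop :=
  (exists r g d, 0 < r /\ (forall u, in_ball z r u -> f u = Some (g u)) /\
     is_cderiv g z d /\ v = 2 * Cabs d / (1 + Cnorm2 (g z)))
  \/
  (f z = None /\ exists r g d, 0 < r /\
     (forall u, in_ball z r u -> recip (f u) = Some (g u)) /\
     is_cderiv g z d /\ v = 2 * Cabs d / (1 + Cnorm2 (g z))).

Definition normHS (fs : CC -> R) (z : CC) : R := fs z * (1 - Cnorm2 z) / 2.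

Definition RI (h : R -> R) (a b : R) : R :=
  match excluded_middle_informative (inhabited (Riemann_integrable h a b)) with
  | left H => RiemannInt (epsilon H (fun _ => True))
  | right _ => 0
  end.

Definition disk_integral (h : CC -> R) (s : R) : R :=
  RI (fun x => RI (fun y => h (x, y)) (- sqrt (s * s - x * x)) (sqrt (s * s - x * x)))
     (- s) s.

(** S(f;s) = (1/4π) ∫_{|z|<s} |f'|^2 λ_S(f)^2 dxdy = (1/4π) ∫ (f^#)^2 *)
Definition S_char (fs : CC -> R) (s : R) : R :=
  / (4 * PI) * disk_integral (fun z => fs z * fs z) s.

Definition T_char (fs : CC -> R) (r : R) : R :=
  RI (fun s => S_char fs s / s) 0 r.

Definition gamma (theta t : R) : CC :=
  (tanh (t / 2) * cos theta, tanh (t / 2) * sin theta).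

Definition L_S (fs : CC -> R) (theta rho0 : R) : R :=
  RI (fun t => normHS fs (gamma theta t)) 0 rho0.

From Stdlib Require Import Reals Lra Psatz ClassicalEpsilon.
From Coquelicot Require Import Rcomplements Hierarchy Continuity Derive AutoDerive RInt RInt_analysis ElemFct.
Open Scope R_scope.

(** We exhibit [f(z) = exp(-i (1 - z)^(-1/4))] on the unit disk (principal
    fourth root) and the radius [theta = 0].  Writing [h = -i (1 - z)^(-1/4)],
    [|h'(z)| = 1/(4 |1 - z|^(5/4))], and since [2t/(1 + t^2) <= 1] the spherical
    derivative satisfies [f^# <= |h'|].  Integrating [(f^#)^2] slice by slice
    gives [S(f; s) <= s / (16 sqrt(1 - s))], hence [T(f; r) <= 1/8].  On the
    real diameter [|f| = 1], so [f^#(x) = |h'(x)|] and, with [x = tanh(t/2)],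
    the integrand of [L_S] grows like [e^(t/4)]; it is at least [t/40], so
    [L_S(rho) >= rho^2 / 80] and [L_S(rho)/rho -> oo]. *)

Lemma continuous_of_ex_derive (f : R -> R) (x : R) : ex_derive f x -> continuous f x.
Proof. exact (ex_derive_continuous f x). Qed.

Lemma continuity_pt_of_ex_derive (f : R -> R) (x : R) :
  ex_derive f x -> continuity_pt f x.
Proof. intros H. apply continuity_pt_filterlim, continuous_of_ex_derive, H. Qed.

Lemma RI_RInt (h : R -> R) (a b : R) : ex_RInt h a b -> RI h a b = RInt h a b.
Proof.
  intros Hh. unfold RI.
  destruct excluded_middle_informative as [[pr] | Hn].
  - rewrite (RInt_Reals h a b pr). apply RiemannInt_P5.
  - exfalso. apply Hn. constructor. exact (ex_RInt_Reals_0 h a b Hh).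
Qed.

Lemma RI_not_integrable (h : R -> R) (a b : R) : ~ ex_RInt h a b -> RI h a b = 0.
Proof.
  intros Hn. unfold RI.
  destruct excluded_middle_informative as [[pr] | _]; [|reflexivity].
  exfalso. exact (Hn (ex_RInt_Reals_1 h a b pr)).
Qed.

Lemma RInt_antiderivative (g G : R -> R) (a b : R) : a <= b ->
  (forall x, a <= x <= b -> continuous g x) ->
  (forall x, a <= x <= b -> is_derive G x (g x)) ->
  RInt g a b = G b - G a.
Proof.
  intros Hab Hc Hd. apply is_RInt_unique, (is_RInt_derive G g).
  - intros x Hx. rewrite Rmin_left, Rmax_right in Hx by lra. auto.
  - intros x Hx. rewrite Rmin_left, Rmax_right in Hx by lra. auto.
Qed.

Lemma ex_RInt_of_continuous (f : R -> R) (a b : R) : a <= b ->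
  (forall x, a <= x <= b -> continuous f x) -> ex_RInt f a b.
Proof.
  intros Hab Hf. apply (ex_RInt_continuous (V := R_CompleteNormedModule)).
  intros x Hx. rewrite Rmin_left, Rmax_right in Hx by lra. auto.
Qed.

(** Upper bound for [RI h] by a nonnegative continuous majorant [g] with
    antiderivative [G]; no integrability of [h] is needed, since otherwise
    [RI h = 0]. *)
Lemma RI_le_antiderivative (h g G : R -> R) (a b : R) : a <= b ->
  (forall x, a < x < b -> h x <= g x) ->
  (forall x, a < x < b -> 0 <= g x) ->
  (forall x, a <= x <= b -> continuous g x) ->
  (forall x, a <= x <= b -> is_derive G x (g x)) ->
  RI h a b <= G b - G a.
Proof.
  intros Hab Hle Hpos Hc Hd.
  assert (Hg := ex_RInt_of_continuous g a b Hab Hc).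
  rewrite <- (RInt_antiderivative g G a b) by assumption.
  destruct (classic (ex_RInt h a b)) as [Hh | Hn].
  - rewrite RI_RInt by exact Hh. apply RInt_le; assumption.
  - rewrite RI_not_integrable by exact Hn. apply RInt_ge_0; assumption.
Qed.

Lemma RI_ge_antiderivative (h g G : R -> R) (a b : R) : a <= b ->
  (forall x, a <= x <= b -> continuous h x) ->
  (forall x, a < x < b -> g x <= h x) ->
  (forall x, a <= x <= b -> continuous g x) ->
  (forall x, a <= x <= b -> is_derive G x (g x)) ->
  G b - G a <= RI h a b.
Proof.
  intros Hab Hch Hle Hc Hd.
  rewrite <- (RInt_antiderivative g G a b), RI_RInt
    by auto using ex_RInt_of_continuous.
  apply RInt_le; auto using ex_RInt_of_continuous.
Qed.

Lemma CC_eta (z : CC) : z = (fst z, snd z).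
Proof. destruct z; reflexivity. Qed.

Lemma Cnorm2_nonneg (z : CC) : 0 <= Cnorm2 z.
Proof. unfold Cnorm2; nra. Qed.

Lemma Cabs_nonneg (z : CC) : 0 <= Cabs z.
Proof. apply sqrt_pos. Qed.

Lemma Cabs_sq (z : CC) : Cabs z * Cabs z = Cnorm2 z.
Proof. apply sqrt_sqrt, Cnorm2_nonneg. Qed.

Lemma Cabs_mul (u v : CC) : Cabs (Cmul u v) = Cabs u * Cabs v.
Proof.
  unfold Cabs. rewrite <- sqrt_mult by apply Cnorm2_nonneg.
  f_equal. unfold Cnorm2, Cmul; simpl; ring.
Qed.

Lemma Cabs_C0 : Cabs C0 = 0.
Proof. unfold Cabs, Cnorm2, C0; simpl. rewrite Rmult_0_l, Rplus_0_l; apply sqrt_0. Qed.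

Lemma Cabs_unit (a b : R) : a * a + b * b = 1 -> Cabs (a, b) = 1.
Proof. intros H. unfold Cabs, Cnorm2; simpl. rewrite H. apply sqrt_1. Qed.

Lemma fst_le_Cabs (z : CC) : Rabs (fst z) <= Cabs z.
Proof.
  rewrite <- sqrt_Rsqr_abs. apply sqrt_le_1_alt. unfold Rsqr, Cnorm2; nra.
Qed.

Lemma snd_le_Cabs (z : CC) : Rabs (snd z) <= Cabs z.
Proof.
  rewrite <- sqrt_Rsqr_abs. apply sqrt_le_1_alt. unfold Rsqr, Cnorm2; nra.
Qed.

Lemma Cabs_ge_fst (z : CC) : fst z <= Cabs z.
Proof. pose proof (fst_le_Cabs z); pose proof (Rle_abs (fst z)); lra. Qed.

Lemma Cabs_le_l1 (z : CC) : Cabs z <= Rabs (fst z) + Rabs (snd z).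
Proof.
  pose proof (Rabs_pos (fst z)); pose proof (Rabs_pos (snd z)).
  rewrite <- (sqrt_square (Rabs (fst z) + Rabs (snd z))) by lra.
  apply sqrt_le_1_alt. unfold Cnorm2.
  pose proof (Rsqr_abs (fst z)); pose proof (Rsqr_abs (snd z)). unfold Rsqr in *. nra.
Qed.

Lemma Cabs_triang (u v : CC) : Cabs (Cadd u v) <= Cabs u + Cabs v.
Proof.
  pose proof (Cabs_nonneg u); pose proof (Cabs_nonneg v).
  pose proof (Cabs_sq u); pose proof (Cabs_sq v).
  unfold Cabs at 1. rewrite <- (sqrt_square (Cabs u + Cabs v)) by lra.
  apply sqrt_le_1_alt.
  assert (Cauchy_Schwarz : fst u * fst v + snd u * snd v <= Cabs u * Cabs v).
  { destruct (Rle_dec (fst u * fst v + snd u * snd v) 0); [nra|].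
    apply Rsqr_incr_0_var; [|apply Rmult_le_pos; auto].
    unfold Rsqr. replace (Cabs u * Cabs v * (Cabs u * Cabs v)) with
      ((Cabs u * Cabs u) * (Cabs v * Cabs v)) by ring.
    rewrite H1, H2. unfold Cnorm2.
    pose proof (Rle_0_sqr (fst u * snd v - snd u * fst v)). unfold Rsqr in *. nra. }
  unfold Cnorm2, Cadd in *; simpl. nra.
Qed.

Lemma Cnorm2_eq0 (z : CC) : Cnorm2 z = 0 -> z = C0.
Proof.
  destruct z as [a b]; unfold Cnorm2, C0; simpl; intros H.
  f_equal; nra.
Qed.

Lemma Cnorm2_neq0_of_re (z : CC) : 0 < fst z -> Cnorm2 z <> 0.
Proof. destruct z as [a b]; unfold Cnorm2; simpl; intros; nra. Qed.

Lemma Cinv_mul_cancel (x y : CC) : Cnorm2 x <> 0 -> Cmul (Cinv x) (Cmul x y) = y.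
Proof.
  destruct x as [a b], y as [c d]; unfold Cinv, Cmul, Cnorm2; simpl; intros H.
  f_equal; field; auto.
Qed.

Lemma Cabs_Cinv (x : CC) : Cnorm2 x <> 0 -> Cabs (Cinv x) = / Cabs x.
Proof.
  intros H. unfold Cabs. rewrite <- sqrt_inv. f_equal.
  revert H; destruct x as [a b]; unfold Cinv, Cnorm2; simpl; intros H. field; auto.
Qed.

Definition Copp (z : CC) : CC := (- fst z, - snd z).

Lemma Cabs_Copp (x : CC) : Cabs (Copp x) = Cabs x.
Proof. unfold Cabs, Cnorm2, Copp; simpl. f_equal; ring. Qed.

Lemma Cabs_double (x : CC) : Cabs (Cadd x x) = 2 * Cabs x.
Proof.
  replace (Cadd x x) with (Cmul (2, 0) x) by (unfold Cmul, Cadd; simpl; f_equal; ring).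
  rewrite Cabs_mul. f_equal. unfold Cabs, Cnorm2; simpl.
  replace (2 * 2 + 0 * 0) with (2 * 2) by ring. apply sqrt_square; lra.
Qed.

Lemma Csub_diag (z : CC) : Csub z z = C0.
Proof. unfold Csub, C0; f_equal; ring. Qed.

Lemma Cadd_Csub (z w : CC) : Cadd z (Csub w z) = w.
Proof. rewrite (CC_eta w) at 2. unfold Cadd, Csub; simpl; f_equal; ring. Qed.

Lemma Csub_Cadd (z h : CC) : Csub (Cadd z h) z = h.
Proof. rewrite (CC_eta h) at 2. unfold Cadd, Csub; simpl; f_equal; ring. Qed.

Definition rcont (u : CC -> R) (z : CC) : Prop :=
  forall e, 0 < e -> exists d, 0 < d /\
    forall w, Cabs (Csub w z) < d -> Rabs (u w - u z) < e.

Definition ccont (F : CC -> CC) (z : CC) : Prop :=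
  rcont (fun w => fst (F w)) z /\ rcont (fun w => snd (F w)) z.

Lemma rcont_const (c : R) (z : CC) : rcont (fun _ => c) z.
Proof.
  intros e He; exists 1; split; [lra|].
  intros; rewrite Rminus_diag, Rabs_R0; auto.
Qed.

Lemma rcont_fst (z : CC) : rcont fst z.
Proof.
  intros e He; exists e; split; auto. intros w Hw.
  eapply Rle_lt_trans; [|exact Hw]. apply (fst_le_Cabs (Csub w z)).
Qed.

Lemma rcont_snd (z : CC) : rcont snd z.
Proof.
  intros e He; exists e; split; auto. intros w Hw.
  eapply Rle_lt_trans; [|exact Hw]. apply (snd_le_Cabs (Csub w z)).
Qed.

Lemma rcont_plus (u v : CC -> R) (z : CC) :
  rcont u z -> rcont v z -> rcont (fun w => u w + v w) z.
Proof.
  intros Hu Hv e He.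
  destruct (Hu (e/2)) as [d1 [Hd1 H1]]; [lra|].
  destruct (Hv (e/2)) as [d2 [Hd2 H2]]; [lra|].
  exists (Rmin d1 d2); split; [apply Rmin_glb_lt; auto|].
  intros w Hw.
  specialize (H1 w (Rlt_le_trans _ _ _ Hw (Rmin_l _ _))).
  specialize (H2 w (Rlt_le_trans _ _ _ Hw (Rmin_r _ _))).
  replace (u w + v w - (u z + v z)) with ((u w - u z) + (v w - v z)) by ring.
  eapply Rle_lt_trans; [apply Rabs_triang|]. lra.
Qed.

Lemma rcont_comp (phi : R -> R) (u : CC -> R) (z : CC) :
  continuity_pt phi (u z) -> rcont u z -> rcont (fun w => phi (u w)) z.
Proof.
  intros Hphi Hu e He.
  destruct (Hphi e He) as [a [Ha H1]].
  destruct (Hu a Ha) as [d [Hd H2]].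
  exists d; split; auto. intros w Hw.
  destruct (Req_dec (u w) (u z)) as [E|E].
  - rewrite E, Rminus_diag, Rabs_R0; auto.
  - apply (H1 (u w)). split; [split; [exact I | auto] | apply H2; auto].
Qed.

Lemma rcont_opp (u : CC -> R) (z : CC) : rcont u z -> rcont (fun w => - u w) z.
Proof.
  apply (rcont_comp (fun t => - t)), continuity_pt_of_ex_derive. auto_derive; auto.
Qed.

(** Products are continuous, by polarization [uv = ((u+v)^2 - (u-v)^2)/4]. *)
Lemma rcont_mult (u v : CC -> R) (z : CC) :
  rcont u z -> rcont v z -> rcont (fun w => u w * v w) z.
Proof.
  intros Hu Hv.
  assert (Hsq : forall p, rcont p z -> rcont (fun w => p w * p w / 4) z).
  { intros p Hp. apply (rcont_comp (fun t => t * t / 4)); auto.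
    apply continuity_pt_of_ex_derive. auto_derive; auto. }
  assert (H := rcont_plus _ _ z (Hsq _ (rcont_plus _ _ z Hu Hv))
                 (rcont_opp _ z (Hsq _ (rcont_plus _ _ z Hu (rcont_opp _ z Hv))))).
  intros e He. destruct (H e He) as [d [Hd Hw]]. exists d; split; auto.
  intros w Hdw. specialize (Hw w Hdw).
  replace (u w * v w - u z * v z) with
    ((u w + v w) * (u w + v w) / 4 + - ((u w + - v w) * (u w + - v w) / 4) -
     ((u z + v z) * (u z + v z) / 4 + - ((u z + - v z) * (u z + - v z) / 4)))
    by field.
  exact Hw.
Qed.

Lemma rcont_inv (u : CC -> R) (z : CC) :
  u z <> 0 -> rcont u z -> rcont (fun w => / u w) z.
Proof.
  intros Hz. apply (rcont_comp Rinv), continuity_pt_of_ex_derive.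
  auto_derive; auto.
Qed.

Lemma rcont_sqrt (u : CC -> R) (z : CC) :
  0 <= u z -> rcont u z -> rcont (fun w => sqrt (u w)) z.
Proof. intros H0. apply (rcont_comp sqrt). apply continuity_pt_sqrt; auto. Qed.

Lemma rcont_Cabs (z : CC) : rcont Cabs z.
Proof.
  apply (rcont_sqrt Cnorm2); [apply Cnorm2_nonneg|].
  unfold Cnorm2. apply rcont_plus; apply rcont_mult;
    auto using rcont_fst, rcont_snd.
Qed.

Lemma rcont_local (u v : CC -> R) (z : CC) (d : R) : 0 < d ->
  (forall w, Cabs (Csub w z) < d -> u w = v w) -> rcont v z -> rcont u z.
Proof.
  intros Hd E H e He. destruct (H e He) as [d1 [Hd1 H1]].
  exists (Rmin d d1); split; [apply Rmin_glb_lt; auto|].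
  intros w Hw.
  rewrite (E z) by (rewrite Csub_diag, Cabs_C0; exact Hd).
  rewrite (E w) by (eapply Rlt_le_trans; [exact Hw | apply Rmin_l]).
  apply H1; eapply Rlt_le_trans; [exact Hw | apply Rmin_r].
Qed.

Lemma ccont_ball (F : CC -> CC) (z : CC) : ccont F z ->
  forall e, 0 < e -> exists d, 0 < d /\
    forall w, Cabs (Csub w z) < d -> Cabs (Csub (F w) (F z)) < e.
Proof.
  intros [H1 H2] e He.
  destruct (H1 (e/2)) as [d1 [Hd1 A1]]; [lra|].
  destruct (H2 (e/2)) as [d2 [Hd2 A2]]; [lra|].
  exists (Rmin d1 d2); split; [apply Rmin_glb_lt; auto|].
  intros w Hw.
  specialize (A1 w (Rlt_le_trans _ _ _ Hw (Rmin_l _ _))).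
  specialize (A2 w (Rlt_le_trans _ _ _ Hw (Rmin_r _ _))).
  eapply Rle_lt_trans; [apply Cabs_le_l1|]. simpl. lra.
Qed.

Lemma ccont_of_ball (F : CC -> CC) (z : CC) :
  (forall e, 0 < e -> exists d, 0 < d /\
    forall w, Cabs (Csub w z) < d -> Cabs (Csub (F w) (F z)) < e) -> ccont F z.
Proof.
  intros H. split; intros e He; destruct (H e He) as [d [Hd H1]];
    exists d; split; auto; intros w Hw; specialize (H1 w Hw).
  - eapply Rle_lt_trans; [|exact H1]. apply (fst_le_Cabs (Csub (F w) (F z))).
  - eapply Rle_lt_trans; [|exact H1]. apply (snd_le_Cabs (Csub (F w) (F z))).
Qed.

Lemma rcont_ccomp (u : CC -> R) (F : CC -> CC) (z : CC) :
  ccont F z -> rcont u (F z) -> rcont (fun w => u (F w)) z.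
Proof.
  intros HF Hu e He.
  destruct (Hu e He) as [d1 [Hd1 H1]].
  destruct (ccont_ball F z HF d1 Hd1) as [d2 [Hd2 H2]].
  exists d2; split; auto.
Qed.

Lemma ccont_comp (G F : CC -> CC) (z : CC) :
  ccont F z -> ccont G (F z) -> ccont (fun w => G (F w)) z.
Proof. intros HF [H1 H2]; split; apply (rcont_ccomp (fun w => _ (G w))); auto. Qed.

Lemma ccont_const (c z : CC) : ccont (fun _ => c) z.
Proof. split; apply rcont_const. Qed.

Lemma ccont_id (z : CC) : ccont (fun w => w) z.
Proof. split; [apply rcont_fst | apply rcont_snd]. Qed.

Lemma ccont_add (F G : CC -> CC) (z : CC) :
  ccont F z -> ccont G z -> ccont (fun w => Cadd (F w) (G w)) z.
Proof. intros [A1 A2] [B1 B2]; split; simpl; apply rcont_plus; auto. Qed.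

Lemma ccont_sub (F G : CC -> CC) (z : CC) :
  ccont F z -> ccont G z -> ccont (fun w => Csub (F w) (G w)) z.
Proof.
  intros [A1 A2] [B1 B2]; split; simpl; apply rcont_plus; auto; apply rcont_opp; auto.
Qed.

Lemma ccont_mul (F G : CC -> CC) (z : CC) :
  ccont F z -> ccont G z -> ccont (fun w => Cmul (F w) (G w)) z.
Proof.
  intros [A1 A2] [B1 B2]; split; simpl.
  - apply rcont_plus; [|apply rcont_opp]; apply rcont_mult; auto.
  - apply rcont_plus; apply rcont_mult; auto.
Qed.

Lemma ccont_inv (F : CC -> CC) (z : CC) :
  Cnorm2 (F z) <> 0 -> ccont F z -> ccont (fun w => Cinv (F w)) z.
Proof.
  intros Hn [A1 A2].
  assert (Hc : rcont (fun w => / Cnorm2 (F w)) z).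
  { apply rcont_inv; auto. unfold Cnorm2. apply rcont_plus; apply rcont_mult; auto. }
  split; simpl; unfold Rdiv; apply rcont_mult; auto. apply rcont_opp; auto.
Qed.

Lemma ccont_local (F G : CC -> CC) (z : CC) (d : R) : 0 < d ->
  (forall w, Cabs (Csub w z) < d -> F w = G w) -> ccont G z -> ccont F z.
Proof.
  intros Hd E [A1 A2]; split;
    [ apply (rcont_local _ (fun w => fst (G w)) z d)
    | apply (rcont_local _ (fun w => snd (G w)) z d) ];
    auto; intros w Hw; rewrite E; auto.
Qed.

(** Caratheodory differentiability: near [z], [g w - g z = Phi w * (w - z)]
    with [Phi] continuous at [z] and [Phi z = d].  It implies complex
    differentiability with derivative [d] and makes the chain rule a
    one-line computation. *)
Definition cdiff (g : CC -> CC) (z d : CC) : Prop :=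
  exists del (Phi : CC -> CC), 0 < del /\
    (forall w, Cabs (Csub w z) < del -> Csub (g w) (g z) = Cmul (Phi w) (Csub w z)) /\
    Phi z = d /\ ccont Phi z.

Lemma cdiff_cont (g : CC -> CC) (z d : CC) : cdiff g z d -> ccont g z.
Proof.
  intros [del [Phi [Hd [E [_ HP]]]]].
  apply (ccont_local _ (fun w => Cadd (g z) (Cmul (Phi w) (Csub w z))) z del Hd).
  - intros w Hw. rewrite <- E by auto. symmetry. apply Cadd_Csub.
  - apply ccont_add; [apply ccont_const|]. apply ccont_mul; auto.
    apply ccont_sub; [apply ccont_id | apply ccont_const].
Qed.

Lemma cdiff_is_cderiv (g : CC -> CC) (z d : CC) : cdiff g z d -> is_cderiv g z d.
Proof.
  intros [del [Phi [Hd [E [HPz HP]]]]] eps He.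
  destruct (ccont_ball Phi z HP eps He) as [d1 [Hd1 H1]].
  exists (Rmin del d1); split; [apply Rmin_glb_lt; auto|].
  intros h [_ Hh].
  assert (Hw : Cabs (Csub (Cadd z h) z) < Rmin del d1) by (rewrite Csub_Cadd; auto).
  rewrite E by (eapply Rlt_le_trans; [exact Hw | apply Rmin_l]).
  rewrite Csub_Cadd.
  replace (Csub (Cmul (Phi (Cadd z h)) h) (Cmul d h)) with
    (Cmul (Csub (Phi (Cadd z h)) (Phi z)) h)
    by (rewrite HPz; unfold Cmul, Csub; simpl; f_equal; ring).
  rewrite Cabs_mul. apply Rmult_le_compat_r; [apply Cabs_nonneg|].
  left. apply H1. eapply Rlt_le_trans; [exact Hw | apply Rmin_r].
Qed.

Lemma cdiff_comp (g f : CC -> CC) (z df dg : CC) :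
  cdiff f z df -> cdiff g (f z) dg -> cdiff (fun w => g (f w)) z (Cmul dg df).
Proof.
  intros Hf Hg.
  assert (Cf := cdiff_cont _ _ _ Hf).
  destruct Hf as [del1 [Phi [Hd1 [E1 [HP1 C1]]]]].
  destruct Hg as [del2 [Psi [Hd2 [E2 [HP2 C2]]]]].
  destruct (ccont_ball f z Cf del2 Hd2) as [d3 [Hd3 H3]].
  exists (Rmin del1 d3), (fun w => Cmul (Psi (f w)) (Phi w)).
  split; [apply Rmin_glb_lt; auto|]. split; [|split].
  - intros w Hw.
    rewrite E2 by (apply H3; eapply Rlt_le_trans; [exact Hw | apply Rmin_r]).
    rewrite E1 by (eapply Rlt_le_trans; [exact Hw | apply Rmin_l]).
    unfold Cmul; simpl; f_equal; ring.
  - simpl. rewrite HP1, HP2; reflexivity.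
  - apply ccont_mul; auto. apply ccont_comp; auto.
Qed.

Lemma cdiff_affine (g : CC -> CC) (a z : CC) :
  (forall w, Csub (g w) (g z) = Cmul a (Csub w z)) -> cdiff g z a.
Proof.
  intros H. exists 1, (fun _ => a).
  split; [lra|]. split; [auto|]. split; [reflexivity | apply ccont_const].
Qed.

Lemma cdiff_Cinv (u : CC) : Cnorm2 u <> 0 ->
  cdiff Cinv u (Copp (Cmul (Cinv u) (Cinv u))).
Proof.
  intros Hu.
  assert (HA : 0 < Cabs u).
  { apply sqrt_lt_R0. pose proof (Cnorm2_nonneg u); lra. }
  exists (Cabs u), (fun w => Copp (Cmul (Cinv w) (Cinv u))).
  split; auto. split; [|split; [reflexivity|]].
  - intros w Hw.
    assert (Hw0 : Cnorm2 w <> 0).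
    { intros Hn. apply Cnorm2_eq0 in Hn. subst w.
      assert (Cabs (Csub C0 u) = Cabs u) by (unfold Cabs, Cnorm2, Csub, C0; simpl; f_equal; ring).
      lra. }
    revert Hu Hw0. destruct u as [a b], w as [c d].
    unfold Cinv, Cmul, Csub, Copp, Cnorm2; simpl; intros.
    f_equal; field; auto.
  - assert (H : ccont (fun w => Cmul (Cinv w) (Cinv u)) u).
    { apply ccont_mul; [apply ccont_inv; auto; apply ccont_id | apply ccont_const]. }
    destruct H as [H1 H2]. split; simpl; apply rcont_opp; auto.
Qed.

Definition csqrt (w : CC) : CC :=
  (sqrt ((Cabs w + fst w) / 2), snd w / (2 * sqrt ((Cabs w + fst w) / 2))).

Lemma csqrt_re_pos (w : CC) : 0 < fst w -> 0 < fst (csqrt w).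
Proof. intros H. apply sqrt_lt_R0. pose proof (Cabs_ge_fst w). lra. Qed.

Lemma csqrt_sq (w : CC) : 0 < fst w -> Cmul (csqrt w) (csqrt w) = w.
Proof.
  intros H. pose proof (Cabs_ge_fst w) as Hm. pose proof (Cabs_sq w) as Hm2.
  rewrite (CC_eta w) at 3. unfold csqrt, Cmul; simpl.
  set (m := Cabs w) in *. set (p := (m + fst w) / 2).
  assert (Hp : 0 < p) by (unfold p; lra).
  assert (Hx : sqrt p * sqrt p = p) by (apply sqrt_sqrt; lra).
  assert (Hx0 : 0 < sqrt p) by (apply sqrt_lt_R0; lra).
  unfold Cnorm2 in Hm2. f_equal.
  - replace (snd w / (2 * sqrt p) * (snd w / (2 * sqrt p))) with
      (snd w * snd w / (4 * (sqrt p * sqrt p))) by (field; lra).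
    rewrite Hx. apply Rmult_eq_reg_r with (4 * p); [|lra].
    field_simplify; [|lra]. unfold p. nra.
  - field. lra.
Qed.

Lemma Cabs_csqrt (w : CC) : 0 < fst w -> Cabs (csqrt w) * Cabs (csqrt w) = Cabs w.
Proof. intros H. rewrite <- Cabs_mul, csqrt_sq; auto. Qed.

Lemma csqrt_real (w : CC) : snd w = 0 -> snd (csqrt w) = 0.
Proof. intros H. unfold csqrt; simpl. rewrite H. unfold Rdiv; ring. Qed.

Lemma ccont_csqrt (u : CC) : 0 < fst u -> ccont csqrt u.
Proof.
  intros Hu. pose proof (Cabs_ge_fst u).
  assert (Hr : rcont (fun w => (Cabs w + fst w) / 2) u).
  { unfold Rdiv. apply rcont_mult; [|apply rcont_const].
    apply rcont_plus; [apply rcont_Cabs | apply rcont_fst]. }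
  assert (Hs : rcont (fun w => sqrt ((Cabs w + fst w) / 2)) u) by (apply rcont_sqrt; auto; lra).
  split; unfold csqrt; simpl; auto.
  unfold Rdiv. apply rcont_mult; [apply rcont_snd|]. apply rcont_inv.
  - assert (0 < sqrt ((Cabs u + fst u) / 2)) by (apply sqrt_lt_R0; lra). lra.
  - apply rcont_mult; [apply rcont_const | auto].
Qed.

(** [(sqrt w)' = 1 / (2 sqrt w)], from [w - u = (sqrt w + sqrt u)(sqrt w - sqrt u)]. *)
Lemma cdiff_csqrt (u : CC) : 0 < fst u ->
  cdiff csqrt u (Cinv (Cadd (csqrt u) (csqrt u))).
Proof.
  intros Hu. pose proof (csqrt_re_pos u Hu) as Pu.
  exists (fst u), (fun w => Cinv (Cadd (csqrt w) (csqrt u))).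
  split; auto. split; [|split; [reflexivity|]].
  - intros w Hw.
    assert (Hw0 : 0 < fst w).
    { pose proof (fst_le_Cabs (Csub w u)) as H. simpl in H.
      pose proof (Rle_abs (- (fst w - fst u))) as H0. rewrite Rabs_Ropp in H0. lra. }
    pose proof (csqrt_re_pos w Hw0).
    assert (E : Csub w u = Cmul (Cadd (csqrt w) (csqrt u)) (Csub (csqrt w) (csqrt u))).
    { rewrite <- (csqrt_sq w Hw0), <- (csqrt_sq u Hu) at 1.
      unfold Csub, Cmul, Cadd; simpl; f_equal; ring. }
    rewrite E, Cinv_mul_cancel; [reflexivity|].
    apply Cnorm2_neq0_of_re. unfold Cadd; cbn [fst]. lra.
  - apply ccont_inv.
    + apply Cnorm2_neq0_of_re. unfold Cadd; cbn [fst]. lra.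
    + apply ccont_add; [apply ccont_csqrt; auto | apply ccont_const].
Qed.

Lemma Rabs_le_bounds (x y : R) : Rabs x <= y -> - y <= x <= y.
Proof. unfold Rabs; destruct Rcase_abs; lra. Qed.

Lemma sin_taylor_pos (b : R) : 0 <= b <= 1/2 -> Rabs (sin b - b) <= b * b.
Proof.
  intros Hb. destruct (pre_sin_bound b 0) as [Hl Hu]; try lra.
  unfold sin_approx, sin_term in Hl, Hu. simpl in Hl, Hu.
  field_simplify in Hl. field_simplify in Hu.
  assert (0 <= b ^ 3 <= b * b / 2) by (split; [apply pow_le; lra | simpl; nra]).
  assert (b ^ 5 <= b ^ 3) by (simpl; nra).
  apply Rabs_le. split; lra.
Qed.

Lemma sin_taylor (b : R) : Rabs b <= 1/2 -> Rabs (sin b - b) <= b * b.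
Proof.
  intros Hb. apply Rabs_le_bounds in Hb.
  destruct (Rle_dec 0 b).
  - apply sin_taylor_pos; lra.
  - replace (sin b - b) with (- (sin (-b) - (-b))) by (rewrite sin_neg; ring).
    rewrite Rabs_Ropp. replace (b * b) with ((-b) * (-b)) by ring.
    apply sin_taylor_pos; lra.
Qed.

Lemma cos_taylor (b : R) : Rabs b <= 1/2 -> 1 - b * b / 2 <= cos b <= 1.
Proof.
  intros Hb. apply Rabs_le_bounds in Hb.
  destruct (pre_cos_bound b 0) as [Hl _]; try lra.
  unfold cos_approx, cos_term in Hl. simpl in Hl. field_simplify in Hl.
  split; [lra | apply COS_bound].
Qed.

Lemma exp_taylor (a : R) : Rabs a <= 1/2 -> 1 + a <= exp a <= 1 + a + 2 * a * a.
Proof.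
  intros Ha. apply Rabs_le_bounds in Ha. split; [apply exp_ineq1_le|].
  pose proof (exp_ineq1_le (-a)). pose proof (exp_pos a).
  assert (exp a * exp (-a) = 1) by (rewrite <- exp_plus, Rplus_opp_r; apply exp_0).
  assert ((1 + a + 2 * a * a) * (1 - a) >= 1) by nra.
  nra.
Qed.

Definition cexp (w : CC) : CC := (exp (fst w) * cos (snd w), exp (fst w) * sin (snd w)).

Lemma cexp_add (u v : CC) : cexp (Cadd u v) = Cmul (cexp u) (cexp v).
Proof.
  unfold cexp, Cadd, Cmul; simpl. rewrite exp_plus, cos_plus, sin_plus. f_equal; ring.
Qed.

Lemma cexp_C0 : cexp C0 = (1, 0).
Proof. unfold cexp, C0; simpl. rewrite exp_0, cos_0, sin_0. f_equal; ring. Qed.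

Lemma Cabs_cexp (h : CC) : Cabs (cexp h) = exp (fst h).
Proof.
  unfold Cabs, Cnorm2, cexp; simpl.
  replace (exp (fst h) * cos (snd h) * (exp (fst h) * cos (snd h)) +
           exp (fst h) * sin (snd h) * (exp (fst h) * sin (snd h)))
    with (exp (fst h) * exp (fst h) * (Rsqr (sin (snd h)) + Rsqr (cos (snd h))))
    by (unfold Rsqr; ring).
  rewrite sin2_cos2, Rmult_1_r. apply sqrt_square. left; apply exp_pos.
Qed.

Lemma exp_cos_remainder (a b : R) : Rabs a <= 1/2 -> Rabs b <= 1/2 ->
  Rabs (exp a * cos b - 1 - a) <= 2 * a * a + b * b.
Proof.
  intros Ha Hb.
  destruct (exp_taylor a Ha) as [E1 E2]. destruct (cos_taylor b Hb) as [C1 C2].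
  apply Rabs_le_bounds in Ha.
  assert (0 <= exp a * (1 - cos b) <= b * b).
  { split; [apply Rmult_le_pos; lra|].
    apply Rle_trans with (2 * (1 - cos b)); [apply Rmult_le_compat_r; nra | lra]. }
  apply Rabs_le. split; nra.
Qed.

Lemma exp_sin_remainder (a b : R) : Rabs a <= 1/2 -> Rabs b <= 1/2 ->
  Rabs (exp a * sin b - b) <= 3/2 * a * a + 5/2 * b * b.
Proof.
  intros Ha Hb.
  destruct (exp_taylor a Ha) as [E1 E2]. pose proof (sin_taylor b Hb) as S1.
  apply Rabs_le_bounds in Ha.
  replace (exp a * sin b - b) with ((exp a - 1) * sin b + (sin b - b)) by ring.
  eapply Rle_trans; [apply Rabs_triang|]. rewrite Rabs_mult.
  assert (A1 : Rabs (exp a - 1) <= 2 * Rabs a).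
  { apply Rabs_le. unfold Rabs; destruct Rcase_abs; split; nra. }
  assert (A2 : Rabs (sin b) <= 3/2 * Rabs b).
  { apply Rabs_le_bounds in S1. apply Rabs_le_bounds in Hb. apply Rabs_le.
    unfold Rabs; destruct Rcase_abs; split; nra. }
  assert (A3 : Rabs a * Rabs b <= (a * a + b * b) / 2).
  { pose proof (Rsqr_abs a); pose proof (Rsqr_abs b).
    pose proof (Rle_0_sqr (Rabs a - Rabs b)). unfold Rsqr in *. nra. }
  pose proof (Rabs_pos (exp a - 1)); pose proof (Rabs_pos (sin b)).
  assert (Rabs (exp a - 1) * Rabs (sin b) <= (2 * Rabs a) * (3/2 * Rabs b))
    by (apply Rmult_le_compat; auto).
  lra.
Qed.

Lemma cexp_remainder (h : CC) : Cabs h <= 1/2 ->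
  Cabs (Csub (Csub (cexp h) (1, 0)) h) <= 4 * Cnorm2 h.
Proof.
  intros Hh.
  assert (Ha : Rabs (fst h) <= 1/2) by (pose proof (fst_le_Cabs h); lra).
  assert (Hb : Rabs (snd h) <= 1/2) by (pose proof (snd_le_Cabs h); lra).
  eapply Rle_trans; [apply Cabs_le_l1|].
  unfold cexp, Csub, Cnorm2; simpl. rewrite Rminus_0_r.
  pose proof (exp_cos_remainder _ _ Ha Hb). pose proof (exp_sin_remainder _ _ Ha Hb).
  nra.
Qed.

Definition cexp_quot (h : CC) : CC :=
  if Req_EM_T (Cnorm2 h) 0 then (1, 0) else Cmul (Csub (cexp h) (1, 0)) (Cinv h).

Lemma cexp_quot_spec (h : CC) : Csub (cexp h) (1, 0) = Cmul (cexp_quot h) h.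
Proof.
  unfold cexp_quot; destruct Req_EM_T as [e | n].
  - apply Cnorm2_eq0 in e. subst. rewrite cexp_C0. unfold Csub, Cmul, C0; simpl; f_equal; ring.
  - revert n. generalize (Csub (cexp h) (1, 0)). intros [c d]. destruct h as [a b].
    unfold Cmul, Cinv, Cnorm2; simpl; intros n. f_equal; field; auto.
Qed.

Lemma cexp_quot_C0 : cexp_quot C0 = (1, 0).
Proof.
  unfold cexp_quot; destruct Req_EM_T as [e | n]; [reflexivity|].
  exfalso; apply n; unfold Cnorm2, C0; simpl; ring.
Qed.

(** By [cexp_remainder], [|(e^h - 1)/h - 1| <= 4 |h|]. *)
Lemma ccont_cexp_quot : ccont cexp_quot C0.
Proof.
  apply ccont_of_ball. intros e He.
  exists (Rmin (1/2) (e/4)); split; [apply Rmin_glb_lt; lra|].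
  intros w Hw. rewrite (CC_eta w) in Hw. unfold Csub, C0 in Hw. simpl in Hw.
  rewrite !Rminus_0_r, <- CC_eta in Hw. rewrite cexp_quot_C0.
  assert (Hw1 : Cabs w < 1/2) by (eapply Rlt_le_trans; [exact Hw | apply Rmin_l]).
  assert (Hw2 : Cabs w < e/4) by (eapply Rlt_le_trans; [exact Hw | apply Rmin_r]).
  unfold cexp_quot. destruct (Req_EM_T (Cnorm2 w) 0) as [Z | NZ].
  - rewrite Csub_diag, Cabs_C0; auto.
  - assert (E : Csub (Cmul (Csub (cexp w) (1, 0)) (Cinv w)) (1, 0) =
                Cmul (Csub (Csub (cexp w) (1, 0)) w) (Cinv w)).
    { revert NZ. generalize (Csub (cexp w) (1, 0)). intros [c d]. destruct w as [a b].
      unfold Cmul, Cinv, Csub, Cnorm2; simpl; intros n0. f_equal; field; auto. }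
    rewrite E, Cabs_mul, Cabs_Cinv by auto.
    assert (Hp : 0 < Cabs w).
    { apply sqrt_lt_R0. pose proof (Cnorm2_nonneg w). lra. }
    pose proof (cexp_remainder w ltac:(lra)) as B. rewrite <- Cabs_sq in B.
    apply Rle_lt_trans with (4 * (Cabs w * Cabs w) * / Cabs w).
    + apply Rmult_le_compat_r; auto. left; apply Rinv_0_lt_compat; auto.
    + replace (4 * (Cabs w * Cabs w) * / Cabs w) with (4 * Cabs w) by (field; lra). lra.
Qed.

Lemma cdiff_cexp (z : CC) : cdiff cexp z (cexp z).
Proof.
  exists 1, (fun w => Cmul (cexp z) (cexp_quot (Csub w z))).
  split; [lra|]. split; [|split].
  - intros w _. rewrite <- (Cadd_Csub z w) at 1. rewrite cexp_add.
    pose proof (cexp_quot_spec (Csub w z)) as H.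
    destruct (cexp_quot (Csub w z)) as [a b], (cexp (Csub w z)) as [c d],
      (Csub w z) as [e f], (cexp z) as [g h].
    unfold Csub, Cmul in *; simpl in *.
    injection H; intros H1 H2. f_equal; nra.
  - rewrite Csub_diag, cexp_quot_C0. rewrite (CC_eta (cexp z)) at 2.
    unfold Cmul; simpl; f_equal; ring.
  - apply ccont_mul; [apply ccont_const|].
    apply ccont_comp; [apply ccont_sub; [apply ccont_id | apply ccont_const]|].
    rewrite Csub_diag. apply ccont_cexp_quot.
Qed.

(** The example [f(z) = exp(-i (1 - z)^(-1/4))], with the principal fourth
    root of [1 - z], which lies in the right half-plane for [Re z < 1]. *)
Definition one_minus (z : CC) : CC := Csub (1, 0) z.
Definition root2 (z : CC) : CC := csqrt (one_minus z).
Definition root4 (z : CC) : CC := csqrt (root2 z).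
Definition expo (z : CC) : CC := Cmul (0, -1) (Cinv (root4 z)).
Definition g_ex (z : CC) : CC := cexp (expo z).

(** Its derivative, as produced by the chain rule. *)
Definition g_ex' (z : CC) : CC :=
  Cmul (g_ex z)
   (Cmul (0, -1)
    (Cmul (Copp (Cmul (Cinv (root4 z)) (Cinv (root4 z))))
     (Cmul (Cinv (Cadd (root4 z) (root4 z)))
      (Cmul (Cinv (Cadd (root2 z) (root2 z))) (-1, 0))))).

Definition f_ex (z : CC) : Csph := Some (g_ex z).

Definition fs_ex (z : CC) : R := 2 * Cabs (g_ex' z) / (1 + Cnorm2 (g_ex z)).

Lemma in_disk_re_lt1 (z : CC) : in_disk z -> fst z < 1.
Proof. unfold in_disk. pose proof (Cabs_ge_fst z). lra. Qed.

Lemma roots_re_pos (z : CC) : fst z < 1 ->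
  0 < fst (one_minus z) /\ 0 < fst (root2 z) /\ 0 < fst (root4 z).
Proof.
  intros Hz.
  assert (P1 : 0 < fst (one_minus z)) by (unfold one_minus, Csub; simpl; lra).
  pose proof (csqrt_re_pos _ P1) as P2. pose proof (csqrt_re_pos _ P2). auto.
Qed.

Lemma cdiff_g_ex (z : CC) : fst z < 1 -> cdiff g_ex z (g_ex' z).
Proof.
  intros Hz. destruct (roots_re_pos z Hz) as [P1 [P2 P3]].
  assert (D1 : cdiff one_minus z (-1, 0)).
  { apply cdiff_affine. intros w. unfold one_minus, Csub, Cmul; simpl; f_equal; ring. }
  assert (Drot : forall u, cdiff (fun x => Cmul (0, -1) x) u (0, -1)).
  { intros u. apply cdiff_affine. intros w. unfold Csub, Cmul; simpl; f_equal; ring. }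
  pose proof (cdiff_comp _ _ _ _ _ D1 (cdiff_csqrt _ P1)) as D2.
  pose proof (cdiff_comp _ _ _ _ _ D2 (cdiff_csqrt _ P2)) as D4.
  pose proof (cdiff_comp _ _ _ _ _ D4 (cdiff_Cinv _ (Cnorm2_neq0_of_re _ P3))) as Dinv.
  pose proof (cdiff_comp _ _ _ _ _ Dinv (Drot _)) as Dexpo.
  exact (cdiff_comp _ _ _ _ _ Dexpo (cdiff_cexp _)).
Qed.

Lemma meromorphic_f_ex : meromorphic_on_disk f_ex.
Proof.
  split.
  - intros z0 Hz0. exists (1 - Cabs z0). split; [unfold in_disk in Hz0; lra|].
    assert (Hball : forall z, in_ball z0 (1 - Cabs z0) z -> in_disk z).
    { intros z Hz. unfold in_ball, in_disk in *. rewrite <- (Cadd_Csub z0 z).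
      eapply Rle_lt_trans; [apply Cabs_triang | lra]. }
    split; [exact Hball|].
    left. exists g_ex. split; [reflexivity|].
    intros z Hz. exists (g_ex' z).
    apply cdiff_is_cderiv, cdiff_g_ex, in_disk_re_lt1, Hball, Hz.
  - exists C0. split; [unfold in_disk; rewrite Cabs_C0; lra | discriminate].
Qed.

Lemma sph_deriv_f_ex (z : CC) : in_disk z -> sph_deriv f_ex z (fs_ex z).
Proof.
  intros Hz. left. exists 1, g_ex, (g_ex' z).
  split; [lra|]. split; [reflexivity|]. split; [|reflexivity].
  apply cdiff_is_cderiv, cdiff_g_ex, in_disk_re_lt1, Hz.
Qed.

(** [|h'(z)| = 1/(4 |1 - z|^(5/4))] for the exponent [h = -i (1 - z)^(-1/4)]. *)
Definition expo_deriv_abs (z : CC) : R :=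
  / (4 * (Cabs (root4 z) * Cabs (root4 z) * Cabs (root4 z)) * Cabs (root2 z)).

Lemma roots_abs (z : CC) : fst z < 1 ->
  0 < Cabs (root2 z) /\ 0 < Cabs (root4 z) /\
  Cabs (root4 z) * Cabs (root4 z) = Cabs (root2 z) /\
  Cabs (root2 z) * Cabs (root2 z) = Cabs (one_minus z).
Proof.
  intros Hz. destruct (roots_re_pos z Hz) as [P1 [P2 P3]].
  pose proof (Cabs_ge_fst (root2 z)); pose proof (Cabs_ge_fst (root4 z)).
  repeat split; try lra; apply Cabs_csqrt; auto.
Qed.

Lemma expo_deriv_abs_pos (z : CC) : fst z < 1 -> 0 < expo_deriv_abs z.
Proof.
  intros Hz. destruct (roots_abs z Hz) as [Q2 [Q4 _]].
  apply Rinv_0_lt_compat. repeat apply Rmult_lt_0_compat; lra.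
Qed.

Lemma Cabs_g_ex' (z : CC) : fst z < 1 -> Cabs (g_ex' z) = Cabs (g_ex z) * expo_deriv_abs z.
Proof.
  intros Hz. destruct (roots_re_pos z Hz) as [P1 [P2 P3]].
  destruct (roots_abs z Hz) as [Q2 [Q4 _]].
  unfold g_ex', expo_deriv_abs.
  rewrite !Cabs_mul, Cabs_Copp, Cabs_mul, !Cabs_Cinv, !Cabs_double.
  - rewrite (Cabs_unit 0 (-1)), (Cabs_unit (-1) 0) by ring. field. lra.
  - apply Cnorm2_neq0_of_re. unfold Cadd; cbn [fst]. lra.
  - apply Cnorm2_neq0_of_re. unfold Cadd; cbn [fst]. lra.
  - apply Cnorm2_neq0_of_re; auto.
Qed.

(** Since [2t/(1 + t^2) <= 1], the spherical derivative of [e^h] is at most [|h'|]. *)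
Lemma fs_ex_le (z : CC) : fst z < 1 -> 0 <= fs_ex z <= expo_deriv_abs z.
Proof.
  intros Hz. unfold fs_ex. rewrite Cabs_g_ex', <- Cabs_sq by auto.
  pose proof (expo_deriv_abs_pos z Hz). pose proof (Cabs_nonneg (g_ex z)).
  set (t := Cabs (g_ex z)) in *. clearbody t.
  split.
  - apply Rmult_le_pos; [|left; apply Rinv_0_lt_compat]; nra.
  - unfold Rdiv. apply Rmult_le_reg_r with (1 + t * t); [nra|].
    rewrite Rmult_assoc, Rinv_l by nra.
    assert (0 <= expo_deriv_abs z * ((t - 1) * (t - 1)))
      by (apply Rmult_le_pos; [lra | apply Rle_0_sqr]).
    nra.
Qed.

Lemma fs_ex_sq_bound (z : CC) : in_disk z ->
  fs_ex z * fs_ex z <=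
  / (16 * ((1 - fst z) * (1 - fst z) + snd z * snd z) * sqrt (1 - fst z)).
Proof.
  intros Hd. pose proof (in_disk_re_lt1 z Hd) as Hz.
  destruct (roots_abs z Hz) as [Q2 [Q4 [E4 E2]]].
  destruct (fs_ex_le z Hz) as [F0 F1].
  pose proof (expo_deriv_abs_pos z Hz).
  assert (HA : Cabs (one_minus z) * Cabs (one_minus z) =
               (1 - fst z) * (1 - fst z) + snd z * snd z).
  { rewrite Cabs_sq. unfold one_minus, Csub, Cnorm2; simpl. ring. }
  assert (Hq : sqrt (1 - fst z) <= Cabs (root2 z)).
  { rewrite <- (sqrt_square (Cabs (root2 z))) by lra. rewrite E2. apply sqrt_le_1_alt.
    pose proof (Cabs_ge_fst (one_minus z)). unfold one_minus, Csub in *; simpl in *. lra. }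
  assert (Hs : 0 < sqrt (1 - fst z)) by (apply sqrt_lt_R0; lra).
  apply Rle_trans with (expo_deriv_abs z * expo_deriv_abs z); [apply Rmult_le_compat; lra|].
  replace (expo_deriv_abs z * expo_deriv_abs z) with
    (/ (16 * (Cabs (one_minus z) * Cabs (one_minus z)) * Cabs (root2 z)))
    by (unfold expo_deriv_abs; rewrite <- E2, <- E4; field; lra).
  rewrite <- HA. apply Rinv_le_contravar.
  - assert (0 < Cabs (one_minus z)) by nra. apply Rmult_lt_0_compat; nra.
  - apply Rmult_le_compat_l; nra.
Qed.

(** On the real diameter [|f| = 1] and [f^#(x) = 1/(4 (1 - x)^(5/4))]. *)
Lemma fs_ex_on_diameter (z : CC) : snd z = 0 -> fst z < 1 ->
  fs_ex z = / (4 * (1 - fst z) * sqrt (sqrt (1 - fst z))).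
Proof.
  intros Hy Hz. destruct (roots_re_pos z Hz) as [P1 [P2 P3]].
  destruct (roots_abs z Hz) as [Q2 [Q4 [E4 E2]]].
  assert (S4 : snd (root4 z) = 0).
  { apply csqrt_real, csqrt_real. unfold one_minus, Csub; simpl. lra. }
  assert (G1 : Cabs (g_ex z) = 1).
  { unfold g_ex, expo. rewrite Cabs_cexp. unfold Cmul, Cinv; cbn [fst snd].
    rewrite S4. replace (0 * (fst (root4 z) / Cnorm2 (root4 z)) - -1 * (- 0 / Cnorm2 (root4 z)))
      with 0 by (unfold Rdiv; ring). apply exp_0. }
  assert (A1 : Cabs (one_minus z) = 1 - fst z).
  { unfold Cabs, one_minus, Csub, Cnorm2; simpl. rewrite Hy.
    replace ((1 - fst z) * (1 - fst z) + (0 - 0) * (0 - 0)) with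
      ((1 - fst z) * (1 - fst z)) by ring.
    apply sqrt_square; lra. }
  assert (A4 : sqrt (sqrt (1 - fst z)) = Cabs (root4 z))
    by (rewrite <- A1, <- E2, sqrt_square, <- E4, sqrt_square; lra).
  unfold fs_ex. rewrite Cabs_g_ex', <- Cabs_sq, G1 by auto.
  unfold expo_deriv_abs. rewrite A4, <- A1, <- E2, <- E4. field. lra.
Qed.

(** [int_{-w}^{w} c/(a^2 + y^2) dy <= c pi / a], from [atan]. *)
Lemma RI_le_lorentzian (h : R -> R) (c a w : R) : 0 <= c -> 0 < a -> 0 <= w ->
  (forall y, - w < y < w -> h y <= c / (a * a + y * y)) ->
  RI h (- w) w <= c * PI / a.
Proof.
  intros Hc Ha Hw Hh.
  assert (Hden : forall y, 0 < a * a + y * y) by (intros; nra).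
  eapply Rle_trans.
  - apply (RI_le_antiderivative h (fun y => c / (a * a + y * y))
             (fun y => c * atan (y / a) / a)); auto; [lra | | |].
    + intros y _. apply Rdiv_le_0_compat; auto.
    + intros y _. apply continuous_of_ex_derive. auto_derive. specialize (Hden y). lra.
    + intros y _. auto_derive; [exact I|]. specialize (Hden y). field. lra.
  - pose proof (atan_bound (w / a)). pose proof (atan_bound (- w / a)).
    replace (c * atan (w / a) / a - c * atan (- w / a) / a)
      with (c / a * (atan (w / a) - atan (- w / a))) by (field; lra).
    replace (c * PI / a) with (c / a * PI) by (field; lra).
    apply Rmult_le_compat_l; [apply Rdiv_le_0_compat|]; lra.
Qed.

(** [int_{-s}^{s} c (1 - x)^(-3/2) dx <= 4 c s / sqrt(1 - s)], from [2c/sqrt(1 - x)]. *)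
Lemma RI_le_three_halves (h : R -> R) (c s : R) : 0 <= c -> 0 < s < 1 ->
  (forall x, - s < x < s -> h x <= c / ((1 - x) * sqrt (1 - x))) ->
  RI h (- s) s <= 4 * c * s / sqrt (1 - s).
Proof.
  intros Hc Hs Hh.
  assert (Hsq : forall x, x < 1 -> 0 < sqrt (1 - x) /\ sqrt (1 - x) * sqrt (1 - x) = 1 - x)
    by (intros x Hx; split; [apply sqrt_lt_R0 | apply sqrt_sqrt]; lra).
  eapply Rle_trans.
  - apply (RI_le_antiderivative h (fun x => c / ((1 - x) * sqrt (1 - x)))
             (fun x => 2 * c / sqrt (1 - x))); auto; [lra | | |].
    + intros x Hx. destruct (Hsq x ltac:(lra)).
      apply Rdiv_le_0_compat; auto. apply Rmult_lt_0_compat; lra.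
    + intros x Hx. destruct (Hsq x ltac:(lra)) as [Hp _].
      apply continuous_of_ex_derive. auto_derive.
      replace (1 + - x) with (1 - x) by ring. repeat split; try lra; nra.
    + intros x Hx. destruct (Hsq x ltac:(lra)) as [Hp Ep].
      auto_derive; replace (1 + - x) with (1 - x) by ring; [repeat split; lra|].
      set (p := sqrt (1 - x)) in *. rewrite <- Ep. field. lra.
  - replace (1 - - s) with (1 + s) by ring.
    destruct (Hsq s ltac:(lra)) as [Hp Ep]. destruct (Hsq (- s) ltac:(lra)) as [Hq Eq].
    replace (1 - - s) with (1 + s) in Hq, Eq by ring.
    set (p := sqrt (1 - s)) in *. set (q := sqrt (1 + s)) in *.
    assert (Hqp : p <= q) by nra.
    assert (Hd : q - p <= 2 * s * q) by nra.
    replace (2 * c / p - 2 * c / q) with (2 * c * (q - p) / (p * q)) by (field; lra).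
    replace (4 * c * s / p) with (2 * c * (2 * s * q) / (p * q)) by (field; lra).
    unfold Rdiv. apply Rmult_le_compat_r; [left; apply Rinv_0_lt_compat; nra|].
    apply Rmult_le_compat_l; lra.
Qed.

(** [int_0^r c/sqrt(1 - x) dx <= 2c], from [-2c sqrt(1 - x)]. *)
Lemma RI_le_inv_sqrt (h : R -> R) (c r : R) : 0 <= c -> 0 <= r < 1 ->
  (forall x, 0 < x < r -> h x <= c / sqrt (1 - x)) ->
  RI h 0 r <= 2 * c.
Proof.
  intros Hc Hr Hh.
  assert (Hsq : forall x, x < 1 -> 0 < sqrt (1 - x))
    by (intros x Hx; apply sqrt_lt_R0; lra).
  eapply Rle_trans.
  - apply (RI_le_antiderivative h (fun x => c / sqrt (1 - x))
             (fun x => - 2 * c * sqrt (1 - x))); auto; [lra | | |].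
    + intros x Hx. apply Rdiv_le_0_compat; auto. apply Hsq; lra.
    + intros x Hx. pose proof (Hsq x ltac:(lra)).
      apply continuous_of_ex_derive. auto_derive.
      replace (1 + - x) with (1 - x) by ring. repeat split; lra.
    + intros x Hx. pose proof (Hsq x ltac:(lra)).
      auto_derive; replace (1 + - x) with (1 - x) by ring; [repeat split; lra|].
      field. lra.
  - rewrite Rminus_0_r, sqrt_1.
    assert (0 <= c * sqrt (1 - r)) by (apply Rmult_le_pos; [lra | apply sqrt_pos]). lra.
Qed.

(** The area integral of [(f^#)^2] over [|z| < s] is [O(1/sqrt(1 - s))]:
    each vertical slice is a Lorentzian integral bounded through
    [fs_ex_sq_bound]. *)
Lemma disk_integral_fs_ex (s : R) : 0 < s < 1 ->
  disk_integral (fun z => fs_ex z * fs_ex z) s <= PI * s / (4 * sqrt (1 - s)).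
Proof.
  intros Hs. pose proof PI_RGT_0. unfold disk_integral.
  replace (PI * s / (4 * sqrt (1 - s))) with (4 * (PI / 16) * s / sqrt (1 - s))
    by (field; apply Rgt_not_eq, sqrt_lt_R0; lra).
  apply RI_le_three_halves; [lra | exact Hs |].
  intros x Hx. pose proof (sqrt_lt_R0 (1 - x) ltac:(lra)) as Hsx.
  replace (PI / 16 / ((1 - x) * sqrt (1 - x)))
    with (/ (16 * sqrt (1 - x)) * PI / (1 - x)) by (field; lra).
  apply RI_le_lorentzian; [left; apply Rinv_0_lt_compat; lra | lra | apply sqrt_pos |].
  intros y Hy.
  assert (Hd : in_disk (x, y)).
  { unfold in_disk, Cabs, Cnorm2; simpl.
    rewrite <- sqrt_1. apply sqrt_lt_1_alt.
    pose proof (sqrt_pos (s * s - x * x)).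
    assert (Hyy : y * y < s * s - x * x).
    { rewrite <- (sqrt_sqrt (s * s - x * x)) by nra. nra. }
    split; nra. }
  eapply Rle_trans; [apply (fs_ex_sq_bound _ Hd)|]. simpl.
  right. field. split; [lra | nra].
Qed.

Lemma S_char_fs_ex (s : R) : 0 < s < 1 -> S_char fs_ex s / s <= / 16 / sqrt (1 - s).
Proof.
  intros Hs. unfold S_char. pose proof PI_RGT_0.
  assert (Hp : 0 < sqrt (1 - s)) by (apply sqrt_lt_R0; lra).
  apply Rle_trans with (/ (4 * PI) * (PI * s / (4 * sqrt (1 - s))) / s).
  - unfold Rdiv. apply Rmult_le_compat_r; [left; apply Rinv_0_lt_compat; lra|].
    apply Rmult_le_compat_l; [left; apply Rinv_0_lt_compat; lra|].
    apply disk_integral_fs_ex, Hs.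
  - right. field. split; lra.
Qed.

Lemma T_char_fs_ex (r : R) : 0 <= r < 1 -> T_char fs_ex r <= 1/8.
Proof.
  intros Hr. unfold T_char.
  replace (1/8) with (2 * / 16) by field.
  apply RI_le_inv_sqrt; [lra | exact Hr |].
  intros s Hs. apply S_char_fs_ex. lra.
Qed.

(** Along the radius [theta = 0], with [x = tanh(t/2)], the integrand of
    [L_S] is [(1 - x^2)/2 * f^#(x) = (1 + x) / (8 (1 - x)^(1/4))]. *)
Definition radial_density (x : R) : R := (1 + x) / (8 * sqrt (sqrt (1 - x))).

Lemma one_minus_tanh (u : R) : 1 - tanh u = 2 / (exp u * exp u + 1).
Proof.
  unfold tanh, sinh, cosh. rewrite exp_Ropp. pose proof (exp_pos u).
  field. split; nra.
Qed.

Lemma tanh_lt_1 (u : R) : tanh u < 1.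
Proof.
  pose proof (one_minus_tanh u). pose proof (exp_pos u).
  assert (0 < 2 / (exp u * exp u + 1)) by (apply Rdiv_lt_0_compat; nra). lra.
Qed.

Lemma tanh_nonneg (u : R) : 0 <= u -> 0 <= tanh u.
Proof.
  intros Hu. pose proof (one_minus_tanh u). pose proof (exp_ineq1_le u).
  assert (2 / (exp u * exp u + 1) <= 1).
  { apply Rmult_le_reg_r with (exp u * exp u + 1); [nra|].
    unfold Rdiv. rewrite Rmult_assoc, Rinv_l; nra. }
  lra.
Qed.

Lemma normHS_on_radius (t : R) :
  normHS fs_ex (gamma 0 t) = radial_density (tanh (t / 2)).
Proof.
  unfold normHS, gamma, radial_density. rewrite cos_0, sin_0, Rmult_1_r, Rmult_0_r.
  pose proof (tanh_lt_1 (t / 2)).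
  rewrite fs_ex_on_diameter by (simpl; auto).
  unfold Cnorm2; simpl.
  assert (0 < sqrt (sqrt (1 - tanh (t / 2)))) by (apply sqrt_lt_R0, sqrt_lt_R0; lra).
  field. lra.
Qed.

Lemma continuous_radial_density (t : R) :
  continuous (fun t => radial_density (tanh (t / 2))) t.
Proof.
  apply (continuous_comp (fun t => tanh (t / 2)) radial_density).
  - apply continuous_of_ex_derive. unfold tanh, sinh, cosh. auto_derive.
    pose proof (exp_pos (t / 2)); pose proof (exp_pos (- (t / 2))). lra.
  - pose proof (tanh_lt_1 (t / 2)).
    assert (0 < sqrt (1 - tanh (t / 2))) by (apply sqrt_lt_R0; lra).
    assert (0 < sqrt (sqrt (1 - tanh (t / 2)))) by (apply sqrt_lt_R0; lra).
    apply continuous_of_ex_derive. unfold radial_density. auto_derive.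
    replace (1 + - tanh (t / 2)) with (1 - tanh (t / 2)) by ring.
    repeat split; lra.
Qed.

(** Linear lower bound: with [q = (1 - x)^(1/4)], [q^4 = 2/(e^t + 1)] and
    [e^t >= (t/4)^4] give [q t <= 5], so the density is at least [t/40]. *)
Lemma radial_density_lb (t : R) : 0 <= t -> t / 40 <= radial_density (tanh (t / 2)).
Proof.
  intros Ht. unfold radial_density.
  pose proof (tanh_nonneg (t / 2) ltac:(lra)) as T0.
  pose proof (tanh_lt_1 (t / 2)) as T1.
  pose proof (one_minus_tanh (t / 2)) as T2.
  assert (HP : t * t / 16 <= exp (t / 2)).
  { replace (exp (t / 2)) with (exp (t / 4) * exp (t / 4)) by (rewrite <- exp_plus; f_equal; field).
    pose proof (exp_ineq1_le (t / 4)). nra. }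
  set (x := tanh (t / 2)) in *. set (P := exp (t / 2)) in *. clearbody x P.
  assert (E1 : sqrt (1 - x) * sqrt (1 - x) = 1 - x) by (apply sqrt_sqrt; lra).
  assert (H1 : 0 < sqrt (1 - x)) by (apply sqrt_lt_R0; lra).
  assert (E2 : sqrt (sqrt (1 - x)) * sqrt (sqrt (1 - x)) = sqrt (1 - x))
    by (apply sqrt_sqrt; lra).
  assert (H2 : 0 < sqrt (sqrt (1 - x))) by (apply sqrt_lt_R0; lra).
  set (q := sqrt (sqrt (1 - x)) ) in *. set (p := sqrt (1 - x)) in *. clearbody q p.
  assert (Hq4 : (q * q) * (q * q) = 1 - x) by (rewrite E2; auto).
  assert (Hm : (1 - x) * (P * P) <= 2).
  { assert ((1 - x) * (P * P + 1) = 2) by (rewrite T2; field; nra). nra. }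
  assert (Hqt : (q * t) * (q * t) * ((q * t) * (q * t)) <= 512).
  { assert ((t * t / 16) * (t * t / 16) <= P * P) by (apply Rmult_le_compat; nra).
    replace ((q * t) * (q * t) * ((q * t) * (q * t))) with
      (((q * q) * (q * q)) * (t * t * t * t)) by ring.
    rewrite Hq4. nra. }
  assert (Hq5 : q * t <= 5).
  { destruct (Rle_dec (q * t) 5) as [|Hn]; auto.
    assert (25 < (q * t) * (q * t)) by nra. nra. }
  apply Rmult_le_reg_r with (8 * q); [lra|].
  replace ((1 + x) / (8 * q) * (8 * q)) with (1 + x) by (field; lra). lra.
Qed.

Lemma L_S_fs_ex_lb (rho : R) : 0 < rho -> rho * rho / 80 <= L_S fs_ex 0 rho.
Proof.
  intros Hr. unfold L_S.
  eapply Rle_trans; [|apply (RI_ge_antiderivative _ (fun t => t / 40) (fun t => t * t / 80))];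
    [right; field | lra | | | |].
  - intros t _. apply (continuous_ext (fun t => radial_density (tanh (t / 2)))).
    + intros u. symmetry. apply normHS_on_radius.
    + apply continuous_radial_density.
  - intros t Ht. rewrite normHS_on_radius. apply radial_density_lb. lra.
  - intros t _. apply continuous_of_ex_derive. auto_derive. exact I.
  - intros t _. auto_derive; [exact I | field].
Qed.

Theorem mainTheorem13 :
  exists (f : CC -> Csph) (fs : CC -> R) (theta : R),
    meromorphic_on_disk f /\
    (forall z, in_disk z -> sph_deriv f z (fs z)) /\
    (exists M, forall r, 0 <= r < 1 -> T_char fs r <= M) /\
    (forall K, exists R0, forall rho0, R0 < rho0 -> L_S fs theta rho0 / rho0 > K).
Proof.
  exists f_ex, fs_ex, 0.
  split; [exact meromorphic_f_ex|].
  split; [exact sph_deriv_f_ex|].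
  split; [exists (1/8); exact T_char_fs_ex|].
  intros K. exists (80 * Rabs K). intros rho Hrho.
  pose proof (Rle_abs K). pose proof (Rabs_pos K).
  assert (Hr : 0 < rho) by lra.
  pose proof (L_S_fs_ex_lb rho Hr) as Hlb.
  apply Rlt_le_trans with (rho / 80); [lra|].
  apply Rmult_le_reg_r with rho; [exact Hr|].
  replace (L_S fs_ex 0 rho / rho * rho) with (L_S fs_ex 0 rho) by (field; lra). lra.
Qed.
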